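(* Let $F_0$ be a totally real number field of degree $r$, with real embeddings $v_1,\dots,v_r$, and fix an extension of $v_1$ to an embedding $\overline{F}_0\hookrightarrow\mathbb{C}$, through which all finite extensions of $F_0$ inside $\overline{F}_0$ are regarded as subfields of $\mathbb{C}$. Let $F$ be a totally real quadratic extension of $F_0$, with $\mathrm{Gal}(F/F_0)=\{1,\tau\}$. Let $\alpha\in F$ be such that $M=F(\sqrt{\alpha})$ is an almost totally complex (ATC) quadratic extension of $F$ which is real under $v_1$. Let $K=F_0(\sqrt{\alpha\alpha^\tau})$, where $\sqrt{\alpha\alpha^\tau}=\sqrt{\alpha}\sqrt{\alpha^\tau}$, and let $L=K(\sqrt{\alpha}+\sqrt{\alpha^\tau})$ and $L'=K(\sqrt{\alpha}-\sqrt{\alpha^\tau})$. Then $K$ is an almost totally real (ATR) extension of $F_0$ which is complex under $v_1$, and the fields $L$ and $L'$ are totally imaginary.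
   Context: A quadratic extension $M/F$ of a totally real field $F$ is almost totally complex (ATC) if all archimedean places of $F$ but exactly one extend to a complex place of $M$ (so $M$ has exactly two real places). A quadratic extension $K/F_0$ of a totally real field $F_0$ is almost totally real (ATR) if exactly one real place of $F_0$ extends to a complex place of $K$, all others extending to pairs of real places. ''$M$ real under $v_1$'' means the fixed embedding extending $v_1$ maps $M$ into $\mathbb{R}$. The fields $K$, $L$, $L'$ are subfields of the Galois closure $\mathcal{M}=F(\sqrt{\alpha},\sqrt{\alpha^\tau})$ of $M/F_0$, whose Galois group over $F_0$ is dihedral of order $8$. *)

(* All number fields are subfields of algC (the algebraic
   complex numbers), viewed through the fixed embedding extending v_1. *)
From mathcomp Require Import all_boot all_order all_algebra all_field.
Set Implicit Arguments. Unset Strict Implicit. Unset Printing Implicit Defensive.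
Import Order.TTheory GRing.Theory Num.Theory.
Local Open Scope ring_scope.

Definition cset := algC -> Prop.

Definition is_subfield (E : cset) : Prop :=
  E 0 /\ E 1 /\
  (forall x y, E x -> E y -> E (x + y)) /\
  (forall x, E x -> E (- x)) /\
  (forall x y, E x -> E y -> E (x * y)) /\
  (forall x, E x -> x != 0 -> E (x^-1)).

Definition subset_c (E F : cset) : Prop := forall x, E x -> F x.

Definition is_number_field (E : cset) : Prop :=
  is_subfield E /\
  exists s : seq algC, forall x, E x ->
    exists c : seq rat, x = \sum_(i < size s) ratr c`_i * s`_i.

Definition adjoin (E : cset) (x : algC) : cset :=
  fun y => forall S, is_subfield S -> subset_c E S -> S x -> S y.

(* a field embedding of E into algC (values outside E are irrelevant) *)
Definition embedding (E : cset) (s : algC -> algC) : Prop :=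
  [/\ s 1 = 1,
      (forall x y, E x -> E y -> s (x + y) = s x + s y) &
      (forall x y, E x -> E y -> s (x * y) = s x * s y)].

Definition real_on (E : cset) (s : algC -> algC) : Prop :=
  forall x, E x -> s x \is Num.real.

Definition totally_real (E : cset) : Prop :=
  forall s, embedding E s -> real_on E s.

Definition totally_imaginary (E : cset) : Prop :=
  forall s, embedding E s -> ~ real_on E s.

Definition extends (F : cset) (s w : algC -> algC) : Prop :=
  forall x, F x -> s x = w x.

Definition quadratic_ext (M F : cset) : Prop :=
  [/\ subset_c F M,
      (exists x, M x /\ ~ F x) &
      (exists t, M t /\ forall x, M x -> exists p q, [/\ F p, F q & x = p + q * t])].

(* M/F almost totally complex: exactly one real place of F extends to real
   places of M, all others extend to a complex place. *)
Definition ATC (M F : cset) : Prop :=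
  [/\ totally_real F, quadratic_ext M F &
      exists w0, embedding F w0 /\
        forall w s, embedding F w -> embedding M s -> extends F s w ->
          (real_on M s <-> extends F w w0)].

(* K/F0 almost totally real: exactly one real place of F0 extends to a
   complex place of K, all others extend to pairs of real places. *)
Definition ATR (K F0 : cset) : Prop :=
  [/\ totally_real F0, quadratic_ext K F0 &
      exists w0, embedding F0 w0 /\
        forall w s, embedding F0 w -> embedding K s -> extends F0 s w ->
          (~ real_on K s <-> extends F0 w w0)].

From mathcomp Require Import all_boot all_order all_algebra all_field.
From mathcomp Require Import ring.
From Stdlib Require Import Classical ClassicalEpsilon FunctionalExtensionality PropExtensionality.
Import Order.TTheory GRing.Theory Num.Theory.
Local Open Scope ring_scope.
Set Implicit Arguments. Unset Strict Implicit.

(* Since M/F is ATC and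
   M is real under v_1, alpha > 0 while every other conjugate of alpha is negative; in
   particular tau alpha < 0. Hence N = alpha tau(alpha) and T = alpha + tau(alpha) lie in F0,
   N < 0, and at every place w of F0 other than v_1 we have w N = A B and w T = A + B with
   A, B < 0. So sqrt N = sqrt(alpha) sqrt(alpha^tau) is imaginary exactly above v_1, i.e. K is
   ATR. For L = K(z) with z = sqrt(alpha) +- sqrt(alpha^tau), z^2 = T + 2 g with g^2 = N: a real
   place of L cannot lie above v_1 (g would be real with negative square), and above any other
   place A + B + 2 g <= 0 by AM-GM, forcing z = 0, which is impossible. *)

Definition span2 (E : cset) (c : algC) : cset :=
  fun z => exists p q, [/\ E p, E q & z = p + q * c].

Section Subfield.
Variable E : cset.
Hypothesis HE : is_subfield E.

Lemma subf0 : E 0. Proof. by case: HE. Qed.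
Lemma subf1 : E 1. Proof. by case: HE => _ []. Qed.
Lemma subfD x y : E x -> E y -> E (x + y). Proof. by case: HE => _ [_ [h _]]; apply: h. Qed.
Lemma subfN x : E x -> E (- x). Proof. by case: HE => _ [_ [_ [h _]]]; apply: h. Qed.
Lemma subfM x y : E x -> E y -> E (x * y). Proof. by case: HE => _ [_ [_ [_ [h _]]]]; apply: h. Qed.
Lemma subfV x : E x -> x != 0 -> E x^-1. Proof. by case: HE => _ [_ [_ [_ [_ h]]]]; apply: h. Qed.
Lemma subfB x y : E x -> E y -> E (x - y). Proof. by move=> Ex Ey; apply/subfD/subfN. Qed.
Lemma subfX x : E x -> E (x ^+ 2). Proof. by move=> Ex; rewrite expr2; apply: subfM. Qed.
Lemma subf_div x y : E x -> E y -> y != 0 -> E (x / y).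
Proof. by move=> Ex Ey y0; apply/subfM/subfV. Qed.

Lemma subf_nat n : E n%:R.
Proof. by elim: n => [|n IHn]; [exact: subf0|rewrite -addn1 natrD; apply/subfD/subf1]. Qed.

End Subfield.

Lemma adjoin_sub E x y : E y -> adjoin E x y.
Proof. by move=> Ey S _ sES _; apply: sES. Qed.

Lemma adjoin_in E x : adjoin E x x.
Proof. by move=> S. Qed.

Lemma adjoin_min E x S : is_subfield S -> subset_c E S -> S x -> subset_c (adjoin E x) S.
Proof. by move=> HS sES Sx y; apply. Qed.

Lemma adjoin_subfield E x : is_subfield (adjoin E x).
Proof.
split; [|split; [|split; [|split; [|split]]]].
- by move=> S HS _ _; apply: subf0.
- by move=> S HS _ _; apply: subf1.
- by move=> y z hy hz S HS *; apply: (subfD HS); [apply: hy|apply: hz].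
- by move=> y hy S HS *; apply: (subfN HS); apply: hy.
- by move=> y z hy hz S HS *; apply: (subfM HS); [apply: hy|apply: hz].
- by move=> y hy y0 S HS *; apply: (subfV HS) => //; apply: hy.
Qed.

Section Span2.
Variables (E : cset) (c : algC).
Hypothesis HE : is_subfield E.

Lemma span2_base x : E x -> span2 E c x.
Proof. by move=> Ex; exists x, 0; split => //; [exact: subf0|ring]. Qed.

Lemma span2_gen : span2 E c c.
Proof. by exists 0, 1; split; [exact: subf0|exact: subf1|ring]. Qed.

Lemma span2_coord_unique p q p' q' : ~ E c -> E p -> E q -> E p' -> E q' ->
  p + q * c = p' + q' * c -> p = p' /\ q = q'.
Proof.
move=> Ec Ep Eq Ep' Eq' e.
have [qq'|qq'] := eqVneq q q'; first by move: e; rewrite qq' => /addIr ->.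
case: Ec; have -> : c = (p' - p) / (q - q').
  apply: (@mulIf _ (q - q')); first by rewrite subr_eq0.
  have -> : p' = p + q * c - q' * c by rewrite e; ring.
  by rewrite mulrVK ?unitfE ?subr_eq0 //; ring.
by apply: subf_div; rewrite ?subr_eq0 //; apply: subfB.
Qed.

Hypothesis Ec2 : E (c ^+ 2).

Lemma span2_subfield : is_subfield (span2 E c).
Proof.
split; [exact: span2_base (subf0 HE)|split; [exact: span2_base (subf1 HE)|]].
split; [|split; [|split]].
- move=> _ _ [p [q [Ep Eq ->]]] [p' [q' [Ep' Eq' ->]]].
  by exists (p + p'), (q + q'); split; [exact: (subfD HE)|exact: (subfD HE)|ring].
- by move=> _ [p [q [Ep Eq ->]]]; exists (- p), (- q); split; [exact: subfN|exact: subfN|ring].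
- move=> _ _ [p [q [Ep Eq ->]]] [p' [q' [Ep' Eq' ->]]].
  exists (p * p' + q * q' * c ^+ 2), (p * q' + q * p'); split; last by ring.
  + by apply: (subfD HE); apply: (subfM HE) => //; apply: (subfM HE).
  + by apply: (subfD HE); apply: (subfM HE).
move=> _ [p [q [Ep Eq ->]]] x0.
pose n := p ^+ 2 - q ^+ 2 * c ^+ 2.
have En : E n by apply: (subfB HE (subfX HE Ep) (subfM HE (subfX HE Eq) Ec2)).
have norm_fact : (p + q * c) * (p - q * c) = n by rewrite /n; ring.
have [n0|n_neq0] := eqVneq n 0; last first.
  exists (p / n), (- q / n); split; [exact: subf_div|apply: subf_div => //; exact: subfN|].
  apply: (mulfI x0); rewrite divff //.
  by move: n_neq0; rewrite -norm_fact mulf_eq0 negb_or andbC => nz; field.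
(* n = 0 forces c = p / q in E, so the inverse lies in E itself *)
move: norm_fact; rewrite n0 => /eqP; rewrite mulf_eq0 (negbTE x0) subr_eq0 => /eqP pE.
have [q0|q_neq0] := eqVneq q 0; first by move: x0; rewrite pE q0 !mul0r addr0 eqxx.
have Ec : E c by rewrite (_ : c = p / q); [exact: subf_div|rewrite pE mulrAC divff ?mul1r].
by apply/span2_base/(subfV HE) => //; apply: (subfD HE) => //; apply: (subfM HE).
Qed.

Lemma adjoin_span2 : adjoin E c = span2 E c.
Proof.
apply: functional_extensionality => z; apply: propositional_extensionality; split.
  by apply: adjoin_min; [exact: span2_subfield|exact: span2_base|exact: span2_gen].
move=> [p [q [Ep Eq ->]]]; have HA := adjoin_subfield E c.
exact: (subfD HA (adjoin_sub Ep) (subfM HA (adjoin_sub Eq) (@adjoin_in E c))).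
Qed.

End Span2.

Section Embedding.
Variables (E : cset) (s : algC -> algC).
Hypotheses (HE : is_subfield E) (Hs : embedding E s).

Lemma emb1 : s 1 = 1. Proof. by case: Hs. Qed.
Lemma embD x y : E x -> E y -> s (x + y) = s x + s y. Proof. by case: Hs => _ h _; apply: h. Qed.
Lemma embM x y : E x -> E y -> s (x * y) = s x * s y. Proof. by case: Hs => _ _ h; apply: h. Qed.

Lemma emb0 : s 0 = 0.
Proof. by apply: (addrI (s 0)); rewrite -embD ?addr0 //; exact: subf0. Qed.

Lemma embX x : E x -> s (x ^+ 2) = s x ^+ 2.
Proof. by move=> Ex; rewrite !expr2 embM. Qed.

Lemma emb_neq0 x : E x -> x != 0 -> s x != 0.
Proof.
move=> Ex x0; apply/eqP => sx0.
by have /eqP := embM Ex (subfV HE Ex x0); rewrite divff // emb1 sx0 mul0r oner_eq0.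
Qed.

Lemma embedding_sub E' : subset_c E' E -> embedding E' s.
Proof.
by move=> sE'E; split=> [|x y /sE'E Ex /sE'E Ey|x y /sE'E Ex /sE'E Ey]; rewrite ?emb1 ?embD ?embM.
Qed.

End Embedding.

Lemma embedding_comp E s t : embedding E s -> embedding E t -> (forall x, E x -> E (t x)) ->
  embedding E (fun z => s (t z)).
Proof.
move=> Hs Ht tE; split=> [|x y Ex Ey|x y Ex Ey].
- by rewrite (emb1 Ht) (emb1 Hs).
- by rewrite (embD Ht) // (embD Hs) //; apply: tE.
- by rewrite (embM Ht) // (embM Hs) //; apply: tE.
Qed.

Lemma real_on_span2 E c s : is_subfield E -> embedding (span2 E c) s ->
  real_on E s -> s c \is Num.real -> real_on (span2 E c) s.
Proof.
move=> HE Hs rE rc _ [p [q [Ep Eq ->]]].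
have [Sp Sq] := (span2_base c HE Ep, span2_base c HE Eq).
have Sqc : span2 E c (q * c) by exists 0, q; split; [exact: subf0|by []|ring].
rewrite (embD Hs Sp Sqc) (embM Hs Sq (span2_gen c HE)).
by rewrite rpredD ?rpredM // rE.
Qed.

Lemma embedding_extend_sqrt E e c (sg : algC -> algC) c' : is_subfield E -> E e -> c ^+ 2 = e ->
  ~ E c -> embedding E sg -> c' ^+ 2 = sg e ->
  exists s, [/\ embedding (span2 E c) s, extends E s sg & s c = c'].
Proof.
move=> HE Ee hc Ec Hsg hc'.
(* s (p + q c) := sg p + sg q c', the coordinates (p, q) being unique and picked by epsilon *)
pose coords_spec z pq := [/\ E pq.1, E pq.2 & z = pq.1 + pq.2 * c].
pose coords z := epsilon (inhabits (0, 0)) (coords_spec z).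
pose s z := sg (coords z).1 + sg (coords z).2 * c'.
have sE p q : E p -> E q -> s (p + q * c) = sg p + sg q * c'.
  move=> Ep Eq; have [E1 E2 ez] : coords_spec (p + q * c) (coords (p + q * c)).
    by rewrite /coords; apply: epsilon_spec; exists (p, q); split.
  by rewrite /s; have [-> ->] := span2_coord_unique HE Ec E1 E2 Ep Eq (esym ez).
clearbody s; have [E0 E1] := (subf0 HE, subf1 HE).
have sEbase p : E p -> s p = sg p.
  by move=> Ep; have := sE p 0 Ep E0; rewrite !mul0r !addr0 (emb0 HE Hsg) mul0r addr0.
exists s; split => //; last first.
  by have := sE 0 1 E0 E1; rewrite add0r mul1r (emb0 HE Hsg) (emb1 Hsg) add0r mul1r.
split; first by rewrite sEbase ?(emb1 Hsg).
- move=> _ _ [p [q [Ep Eq ->]]] [p' [q' [Ep' Eq' ->]]].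
  have [EP EQ] := (subfD HE Ep Ep', subfD HE Eq Eq').
  rewrite (_ : p + q * c + (p' + q' * c) = (p + p') + (q + q') * c); last by ring.
  by rewrite !sE // !(embD Hsg) //; ring.
move=> _ _ [p [q [Ep Eq ->]]] [p' [q' [Ep' Eq' ->]]].
have Epp := subfM HE Ep Ep'; have Eqq := subfM HE Eq Eq'; have Eqqe := subfM HE Eqq Ee.
have Epq := subfM HE Ep Eq'; have Eqp := subfM HE Eq Ep'.
have EP := subfD HE Epp Eqqe; have EQ := subfD HE Epq Eqp.
rewrite (_ : (p + q * c) * (p' + q' * c) = (p * p' + q * q' * e) + (p * q' + q * p') * c);
  last by rewrite -hc; ring.
by rewrite !sE // !(embD Hsg, embM Hsg) // -hc'; ring.
Qed.

Lemma quadratic_ext_sqrt F E : is_subfield E -> is_subfield F -> quadratic_ext F E ->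
  exists u, [/\ E (u ^+ 2), ~ E u & F = span2 E u].
Proof.
move=> HE HF [sEF [x [Fx Ex]] [t [Ft Fspan]]].
have [p0 [q0 [Ep0 Eq0 ht2]]] := Fspan _ (subfX HF Ft).
have two_neq0 : (2 : algC) != 0 by rewrite pnatr_eq0.
(* completing the square: u = 2 t - q0 satisfies u^2 = 4 p0 + q0^2 *)
pose u := 2 * t - q0.
have Fu : F u := subfB HF (subfM HF (subf_nat HF 2) Ft) (sEF _ Eq0).
have Fspan_u : F = span2 E u.
  apply: functional_extensionality => z; apply: propositional_extensionality; split.
    move=> /Fspan [p [q [Ep Eq ->]]]; exists (p + q * q0 / 2), (q / 2); split.
    - exact: (subfD HE Ep (subf_div HE (subfM HE Eq Eq0) (subf_nat HE 2) two_neq0)).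
    - exact: (subf_div HE Eq (subf_nat HE 2) two_neq0).
    - by rewrite /u; field.
  by move=> [p [q [Ep Eq ->]]]; apply: (subfD HF (sEF _ Ep) (subfM HF (sEF _ Eq) Fu)).
exists u; split => //.
- have -> : u ^+ 2 = 4 * p0 + q0 ^+ 2.
    have -> : u ^+ 2 = 4 * t ^+ 2 - 4 * q0 * t + q0 ^+ 2 by rewrite /u; ring.
    by rewrite ht2; ring.
  exact: (subfD HE (subfM HE (subf_nat HE 4) Ep0) (subfX HE Eq0)).
- move=> Eu; apply: Ex; move: Fx; rewrite Fspan_u => -[p [q [Ep Eq ->]]].
  exact: (subfD HE Ep (subfM HE Eq Eu)).
Qed.

Lemma embedding_extend_quadratic F E w : is_subfield E -> is_subfield F -> quadratic_ext F E ->
  embedding E w -> exists2 s, embedding F s & extends E s w.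
Proof.
move=> HE HF qFE Hw; have [u [Eu2 Eu ->]] := quadratic_ext_sqrt HE HF qFE.
by have [s [Hs ext _]] := embedding_extend_sqrt HE Eu2 erefl Eu Hw (sqrtCK _); exists s.
Qed.

Lemma trace_norm_conj E F sigma x : is_subfield E -> is_subfield F -> quadratic_ext F E ->
  embedding F sigma -> (forall y, E y -> sigma y = y) -> (exists y, F y /\ sigma y <> y) ->
  F x -> E (x + sigma x) /\ E (x * sigma x).
Proof.
move=> HE HF qFE Hsig sigE [y [Fy sigy]] Fx.
have [u [Eu2 Eu Fspan]] := quadratic_ext_sqrt HE HF qFE.
have Fu : F u by rewrite Fspan; exact: span2_gen.
have sig_span p q : E p -> E q -> sigma (p + q * u) = p + q * sigma u.
  move=> Ep Eq; have [Fp Fq] : F p /\ F q by rewrite Fspan; split; exact: span2_base.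
  by rewrite (embD Hsig Fp (subfM HF Fq Fu)) (embM Hsig Fq Fu) (sigE p Ep) (sigE q Eq).
have sig_u : sigma u = - u.
  have : (sigma u - u) * (sigma u + u) = 0.
    have -> : (sigma u - u) * (sigma u + u) = sigma u ^+ 2 - u ^+ 2 by ring.
    by rewrite -(embX Hsig Fu) (sigE _ Eu2) subrr.
  move/eqP; rewrite mulf_eq0 subr_eq0 addr_eq0 => /orP[/eqP sig_u_id|/eqP //].
  by case: sigy; move: Fy; rewrite Fspan => -[p [q [Ep Eq ->]]]; rewrite sig_span // sig_u_id.
move: Fx; rewrite Fspan => -[p [q [Ep Eq ->]]]; rewrite sig_span // sig_u.
split; first by rewrite (_ : _ + _ = 2 * p); [exact: subfM (subf_nat HE 2) Ep|ring].
rewrite (_ : _ * _ = p ^+ 2 - q ^+ 2 * u ^+ 2); last by ring.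
exact: (subfB HE (subfX HE Ep) (subfM HE (subfX HE Eq) Eu2)).
Qed.

Lemma embedding_id E : embedding E id.
Proof. by []. Qed.

Lemma quadratic_ext_adjoin_notin F a : is_subfield F -> quadratic_ext (adjoin F a) F -> ~ F a.
Proof. by move=> HF [_ [y [Fay Fy]] _] Fa; apply/Fy/(adjoin_min HF (fun _ h => h) Fa Fay). Qed.

Section AlmostTotallyComplex.
Variables (F0 F : cset) (tau : algC -> algC) (alpha a : algC).
Hypotheses (HF0 : is_subfield F0) (HF : is_subfield F) (qF : quadratic_ext F F0).
Hypotheses (TRF : totally_real F) (Falpha : F alpha) (ha : a ^+ 2 = alpha).
Hypotheses (Hatc : ATC (adjoin F a) F) (realM : real_on (adjoin F a) id).

Lemma ATC_conj_lt0 sg : embedding F sg -> ~ extends F sg id -> sg alpha < 0.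
Proof.
move=> Hsg sg_id; have [_ qM [w0 [_ Hw0]]] := Hatc.
have Fa := quadratic_ext_adjoin_notin HF qM.
have Mspan : adjoin F a = span2 F a by apply: adjoin_span2; rewrite ?ha.
have w0_id : extends F id w0.
  exact: (Hw0 id id (embedding_id F) (embedding_id _) (fun _ _ => erefl)).1 realM.
have [s [Hs s_sg sa]] := embedding_extend_sqrt HF Falpha ha Fa Hsg (sqrtCK (sg alpha)).
have s_not_real : ~ real_on (adjoin F a) s.
  have HsM : embedding (adjoin F a) s by rewrite Mspan.
  by move=> /(Hw0 _ _ Hsg HsM s_sg) sg_w0; apply: sg_id => y Fy; rewrite sg_w0 // -w0_id.
have sg_alpha_real : sg alpha \is Num.real := TRF Hsg Falpha.
have : sqrtC (sg alpha) \isn't Num.real.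
  apply/negP => sa_real; apply: s_not_real; rewrite Mspan; apply: real_on_span2; rewrite ?sa //.
  by move=> y Fy; rewrite s_sg //; exact: TRF.
by rewrite realEsqr sqrtCK -real_ltNge ?real0.
Qed.

Lemma ATC_gt0 : 0 < alpha.
Proof.
have [_ qM _] := Hatc; have Fa := quadratic_ext_adjoin_notin HF qM.
rewrite -ha real_exprn_even_gt0 //=; last exact: realM (@adjoin_in F a).
by apply/eqP => a0; apply: Fa; rewrite a0; exact: subf0 HF.
Qed.

Hypotheses (Htau : embedding F tau) (tauF : forall x, F x -> F (tau x)).
Hypotheses (tau0 : forall x, F0 x -> tau x = x) (tau_nontriv : exists x, F x /\ tau x <> x).

Lemma ATC_places_off_id w : embedding F0 w -> ~ extends F0 w id ->
  exists A B, [/\ A < 0, B < 0, w (alpha * tau alpha) = A * B & w (alpha + tau alpha) = A + B].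
Proof.
move=> Hw w_id; have [sg Hsg sg_w] := embedding_extend_quadratic HF0 HF qF Hw.
have [sF0F _ _] := qF.
have off_id s : extends F0 s w -> ~ extends F s id.
  by move=> s_w s_id; apply: w_id => y Ey; rewrite -s_w // s_id //; exact: sF0F.
have [FT FN] := trace_norm_conj HF0 HF qF Htau tau0 tau_nontriv Falpha.
exists (sg alpha), (sg (tau alpha)); split.
- exact: ATC_conj_lt0 Hsg (off_id _ sg_w).
- apply: (ATC_conj_lt0 (embedding_comp Hsg Htau tauF)); apply: off_id => y Ey.
  by rewrite tau0 // sg_w.
- by rewrite -sg_w // (embM Hsg) //; exact: tauF.
- by rewrite -sg_w // (embD Hsg) //; exact: tauF.
Qed.

End AlmostTotallyComplex.

Lemma sqr_lt0_not_real (x : algC) : x ^+ 2 < 0 -> x \isn't Num.real.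
Proof. by rewrite realEsqr => /lt_geF ->. Qed.

(* AM-GM: |c| = sqrt (A B) <= - (A + B) / 2 *)
Lemma neg_add_twice_sqrt_le0 (A B c : algC) : A < 0 -> B < 0 -> c \is Num.real ->
  c ^+ 2 = A * B -> A + B + 2 * c <= 0.
Proof.
move=> A_lt0 B_lt0 c_real hc.
have [A_real B_real] : A \is Num.real /\ B \is Num.real by rewrite !ltr0_real.
set x := A + B + 2 * c; set y := A + B - 2 * c.
have x_real : x \is Num.real by rewrite !rpredD ?rpredM ?rpred_nat.
have xy_ge0 : 0 <= x * y.
  have -> : x * y = (A - B) ^+ 2.
    have -> : x * y = (A + B) ^+ 2 - 4 * c ^+ 2 by rewrite /x /y; ring.
    by rewrite hc; ring.
  by rewrite -realEsqr rpredB.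
have xy_lt0 : x + y < 0.
  have -> : x + y = 2 * (A + B) by rewrite /x /y; ring.
  by rewrite pmulr_rlt0 // ltr_nDl // ltW.
rewrite real_leNgt ?real0 //; apply/negP => x_gt0.
have y_ge0 : 0 <= y by rewrite -(pmulr_rge0 _ x_gt0).
by have := lt_le_trans xy_lt0 (addr_ge0 (ltW x_gt0) y_ge0); rewrite ltxx.
Qed.

Section NegativeNorm.
Variables (F0 : cset) (N T : algC).
Hypotheses (HF0 : is_subfield F0) (TR0 : totally_real F0).
Hypotheses (F0N : F0 N) (F0T : F0 T) (N_lt0 : N < 0).
Hypothesis places_off_id : forall w, embedding F0 w -> ~ extends F0 w id ->
  exists A B, [/\ A < 0, B < 0, w N = A * B & w T = A + B].

Section SqrtN.
Variable c : algC.
Hypothesis hc : c ^+ 2 = N.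

Lemma adjoin_sqrt_not_real : ~ real_on (adjoin F0 c) id.
Proof. by move=> /(_ c (@adjoin_in F0 c)); apply/negP/sqr_lt0_not_real; rewrite hc. Qed.

Lemma adjoin_sqrt_ATR : ATR (adjoin F0 c) F0.
Proof.
have F0c : ~ F0 c.
  by move=> /(TR0 (embedding_id F0)); apply/negP/sqr_lt0_not_real; rewrite hc.
have F0c2 : F0 (c ^+ 2) by rewrite hc.
rewrite adjoin_span2 //; split => //.
  split; [exact: span2_base|by exists c; split; [exact: span2_gen|]|].
  by exists c; split; [exact: span2_gen|move=> _ [p [q [Ep Eq ->]]]; exists p, q].
exists id; split; first exact: embedding_id.
move=> w s Hw Hs s_w; have Kc := span2_gen c HF0.
have sc2 : s c ^+ 2 = w N by rewrite -(embX Hs Kc) hc s_w.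
split=> [s_not_real|w_id s_real].
  apply: NNPP => w_id; apply: s_not_real.
  have [A [B [A_lt0 B_lt0 wN _]]] := places_off_id Hw w_id.
  apply: real_on_span2 => [//|//|y Ey|]; first by rewrite s_w //; exact: TR0 Hw _ Ey.
  by rewrite realEsqr sc2 wN ltW // nmulr_rgt0.
by move: (s_real c Kc); apply/negP/sqr_lt0_not_real; rewrite sc2 w_id.
Qed.

End SqrtN.

Lemma totally_imaginary_of_sqr L z g : is_subfield L -> subset_c F0 L -> L g -> L z ->
  g ^+ 2 = N -> z ^+ 2 = T + 2 * g -> z != 0 -> totally_imaginary L.
Proof.
move=> HL sF0L Lg Lz hg hz z_neq0 s Hs s_real.
have sg2 : s g ^+ 2 = s N by rewrite -(embX Hs Lg) hg.
have [s_id|s_not_id] := classic (extends F0 s id).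
  by move: (s_real g Lg); apply/negP/sqr_lt0_not_real; rewrite sg2 s_id.
have [A [B [A_lt0 B_lt0 sN sT]]] := places_off_id (embedding_sub Hs sF0L) s_not_id.
have sz2_le0 : s z ^+ 2 <= 0.
  rewrite -(embX Hs Lz) hz mulr_natl mulr2n (embD Hs (sF0L _ F0T) (subfD HL Lg Lg)) (embD Hs Lg Lg).
  by rewrite sT -mulr2n -mulr_natl neg_add_twice_sqrt_le0 ?s_real // sg2 sN.
have sz0 : s z ^+ 2 = 0 by apply/le_anti; rewrite sz2_le0 -realEsqr s_real.
by move/eqP: sz0; rewrite sqrf_eq0 (negbTE (emb_neq0 HL Hs Lz z_neq0)).
Qed.

End NegativeNorm.

Theorem mainTheorem2 (F0 F : cset) (tau : algC -> algC) (alpha a b : algC) :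
  is_number_field F0 -> totally_real F0 ->
  is_subfield F -> quadratic_ext F F0 -> totally_real F ->
  (* Gal(F/F0) = {1, tau} *)
  embedding F tau -> (forall x, F x -> F (tau x)) ->
  (forall x, F0 x -> tau x = x) -> (exists x, F x /\ tau x <> x) ->
  F alpha -> a ^+ 2 = alpha -> b ^+ 2 = tau alpha ->
  ATC (adjoin F a) F -> real_on (adjoin F a) id ->
  [/\ ATR (adjoin F0 (a * b)) F0,
      ~ real_on (adjoin F0 (a * b)) id,
      totally_imaginary (adjoin (adjoin F0 (a * b)) (a + b)) &
      totally_imaginary (adjoin (adjoin F0 (a * b)) (a - b))].
Proof.
move=> [HF0 _] TR0 HF qF TRF Htau tauF tau0 tau_nontriv Falpha ha hb Hatc realM.
have [F0T F0N] := trace_norm_conj HF0 HF qF Htau tau0 tau_nontriv Falpha.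
have alpha_gt0 := ATC_gt0 HF ha Hatc realM.
have tau_alpha_lt0 : tau alpha < 0.
  apply: (ATC_conj_lt0 HF TRF Falpha ha Hatc realM Htau).
  by have [x [Fx tx]] := tau_nontriv; move/(_ x Fx).
have N_lt0 : alpha * tau alpha < 0 by rewrite pmulr_rlt0.
have places := ATC_places_off_id HF0 HF qF TRF Falpha ha Hatc realM Htau tauF tau0 tau_nontriv.
have hab : (a * b) ^+ 2 = alpha * tau alpha by rewrite exprMn ha hb.
have [apb_neq0 amb_neq0] : a + b != 0 /\ a - b != 0.
  apply/andP; rewrite -negb_or -mulf_eq0 (_ : _ * _ = a ^+ 2 - b ^+ 2); last by ring.
  by rewrite subr_eq0 ha hb gt_eqF // (lt_trans tau_alpha_lt0 alpha_gt0).
pose L z := adjoin (adjoin F0 (a * b)) z.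
have F0L z : subset_c F0 (L z) by move=> y F0y; do 2!apply: adjoin_sub.
have abL z : L z (a * b) := adjoin_sub (@adjoin_in F0 (a * b)).
have LI z g := @totally_imaginary_of_sqr _ _ _ F0N F0T N_lt0 places _ z g
  (adjoin_subfield (adjoin F0 (a * b)) z) (F0L z).
split; first exact: adjoin_sqrt_ATR HF0 TR0 F0N N_lt0 places _ hab.
- exact: (@adjoin_sqrt_not_real F0 _ N_lt0 _ hab).
- by apply: (LI _ _ (abL _) (@adjoin_in _ _) hab) => //; rewrite -hb -ha; ring.
- apply: (LI _ _ (subfN (adjoin_subfield _ _) (abL _)) (@adjoin_in _ _)); rewrite ?sqrrN //.
  by rewrite -hb -ha; ring.
Qed.
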